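(* If $E$ is an order continuous quasi-normed symmetric space on $I$ (with $E\subseteq c_0$ if $I=\mathbb N$), then $E\in(HC)$.
   Context: $I$ is either $[0,\alpha)$, $0<\alpha\le\infty$, with Lebesgue measure $m$, or $\mathbb N$ with counting measure $m$; $L_0(I)$ denotes complex measurable functions (resp. sequences) on $I$, and $\mu(t,f)=\inf\{s\ge0: m\{|f|>s\}\le t\}$ is the decreasing rearrangement. A quasi-normed symmetric space on $I$ is a quasi-normed space $E\subseteq L_0(I)$ such that $f\in L_0(I)$, $g\in E$, $\mu(f)\le\mu(g)$ imply $f\in E$ and $\|f\|_E\le\|g\|_E$; standing assumption: $E^*$ separates points of $E$. $E$ is order continuous if for every $f\in E$ and every sequence $0\le f_n\le |f|$ with $f_n\downarrow0$ a.e., $\|f_n\|_E\downarrow0$. The envelope norm is $\|f\|_{\widehat E}=\inf\{\sum_{i=1}^n\|f_i\|_E: f=\sum_{i=1}^nf_i,\ f_i\in E\}$. Convergence in measure: $m\{|f_n-f|>\varepsilon\}\to0$ for every $\varepsilon>0$. $E\in(HC)$ means: every sequence $(f_n)\subseteq E$ Cauchy in $\|\cdot\|_{\widehat E}$ and converging to $0$ in measure satisfies $\|f_n\|_{\widehat E}\to0$. *)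

From HB Require Import structures.
From mathcomp Require Import all_boot all_order all_algebra.
From mathcomp Require Import all_classical all_reals all_analysis.
From mathcomp Require Import complex.
Import Order.TTheory GRing.Theory Num.Theory.

Set Implicit Arguments.
Unset Strict Implicit.
Unset Printing Implicit Defensive.

Local Open Scope classical_set_scope.
Local Open Scope ring_scope.

Definition cabs (R : rcfType) (z : R[i]) : R := Num.sqrt (complex.Re z ^+ 2 + complex.Im z ^+ 2).

Section Defs.
Context {d : measure_display} {T : measurableType d} {R : realType}.
Variables (mu : set T -> \bar R) (D : set T).
(* The space I is modelled as the subset D of T, carrying the measure mu;
   functions on I are functions T -> C vanishing outside D. *)

Definition aeD (P : T -> Prop) : Prop :=
  exists N, [/\ measurable N, mu N = 0%E & forall x, D x -> ~ N x -> P x].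

Definition L0 (f : T -> R[i]) : Prop :=
  [/\ measurable_fun D (fun x => complex.Re (f x)),
      measurable_fun D (fun x => complex.Im (f x)) &
      forall x, ~ D x -> f x = 0].

Definition distf (f : T -> R[i]) (s : R) : \bar R :=
  mu [set x | D x /\ s < cabs (f x)].

Definition rearr (f : T -> R[i]) (t : R) : \bar R :=
  ereal_inf [set s%:E | s in [set s : R | 0 <= s /\ (distf f s <= t%:E)%E]].

Definition rearr_le (f g : T -> R[i]) : Prop :=
  forall t : R, 0 <= t -> (rearr f t <= rearr g t)%E.

Definition scalef (c : R[i]) (f : T -> R[i]) : T -> R[i] := fun x => c * f x.
Definition addf (f g : T -> R[i]) : T -> R[i] := fun x => f x + g x.
Definition subf (f g : T -> R[i]) : T -> R[i] := fun x => f x - g x.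

Variables (E : set (T -> R[i])) (qn : (T -> R[i]) -> R).

(* E is a (complex) linear subspace of L_0 and qn is a quasi-norm on it
   (functions equal a.e. are identified: qn f = 0 iff f = 0 a.e.) *)
Definition is_quasinormed : Prop :=
  [/\ (forall f, E f -> L0 f),
      E (fun=> 0) /\ (forall f g, E f -> E g -> E (addf f g))
        /\ (forall c f, E f -> E (scalef c f)),
      (forall f, E f -> 0 <= qn f /\ (qn f = 0 <-> aeD (fun x => f x = 0))),
      (forall c f, E f -> qn (scalef c f) = cabs c * qn f) &
      (exists K : R, 1 <= K /\
         forall f g, E f -> E g -> qn (addf f g) <= K * (qn f + qn g))].

Definition is_symmetric : Prop :=
  forall f g, L0 f -> E g -> rearr_le f g -> E f /\ qn f <= qn g.

Definition cont_lin_functional (phi : (T -> R[i]) -> R[i]) : Prop :=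
  [/\ (forall f g, E f -> E g -> phi (addf f g) = phi f + phi g),
      (forall c f, E f -> phi (scalef c f) = c * phi f) &
      (forall f, E f -> forall eps : R, 0 < eps ->
         exists2 delta : R, 0 < delta &
           forall g, E g -> qn (subf g f) < delta -> cabs (phi g - phi f) < eps)].

Definition dual_separates : Prop :=
  forall f, E f -> ~ aeD (fun x => f x = 0) ->
    exists phi, cont_lin_functional phi /\ phi f <> 0.

Definition is_qsym_space : Prop :=
  [/\ is_quasinormed, is_symmetric & dual_separates].

Definition order_continuous : Prop :=
  forall f, E f -> forall F : nat -> T -> R[i],
    (forall n, L0 (F n)) ->
    (forall n, aeD (fun x => complex.Im (F n x) = 0 /\ 0 <= complex.Re (F n x)
                             /\ complex.Re (F n x) <= cabs (f x))) ->
    aeD (fun x => (forall n, complex.Re (F n.+1 x) <= complex.Re (F n x)) /\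
                  (fun n => complex.Re (F n x)) @ \oo --> 0%R) ->
    (forall n, qn (F n.+1) <= qn (F n)) /\ (fun n => qn (F n)) @ \oo --> 0%R.

Definition env_norm (f : T -> R[i]) : R :=
  inf [set r : R | exists n (fs : 'I_n -> T -> R[i]),
         [/\ forall i, E (fs i),
             f = (fun x => \sum_(i < n) fs i x) &
             r = \sum_(i < n) qn (fs i)]].

Definition cvg_in_measure (F : nat -> T -> R[i]) (f : T -> R[i]) : Prop :=
  forall eps : R, 0 < eps ->
    (fun n => mu [set x | D x /\ eps < cabs (F n x - f x)]) @ \oo --> 0%E.

Definition HC : Prop :=
  forall F : nat -> T -> R[i], (forall n, E (F n)) ->
    (forall eps : R, 0 < eps -> exists N : nat, forall n m, (N <= n)%N -> (N <= m)%N ->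
        env_norm (subf (F n) (F m)) < eps) ->
    cvg_in_measure F (fun=> 0) ->
    (fun n => env_norm (F n)) @ \oo --> 0%R.

End Defs.

Definition Ico0 (R : realType) (alpha : \bar R) : set R :=
  [set x : R | 0 <= x /\ (x%:E < alpha)%E].

From Pilot Require Import Defs.
From HB Require Import structures.
From mathcomp Require Import all_boot all_order all_algebra.
From mathcomp Require Import all_classical all_reals all_analysis.
From mathcomp Require Import complex measurable_realfun.
From mathcomp Require Import lra.
Import Order.TTheory GRing.Theory Num.Theory.
Local Open Scope classical_set_scope.
Local Open Scope ring_scope.

(** Let (f_n) be envelope-Cauchy and tend to 0 in measure, and let h = f_(n0) be
    envelope-close to all later f_n; it suffices to make the envelope norm of h
    small.  On {|h| < eta} it is small by order continuity, these sets decreasing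
    to {h = 0}.  On {|h| >= eta} /\ {|f_m| > delta} it is small for some m >= n0:
    the measures tend to 0, so along a subsequence with summable measures the tails
    decrease to a null set by Borel-Cantelli, and order continuity applies again.
    On the rest, h = f_m + (h - f_m) with |f_m| <= (delta / eta) |h|, so f_m is
    small in the quasi-norm by symmetry, and h - f_m in the envelope norm. *)

Lemma cvg0_eventually_le {R : realType} (u : nat -> \bar R) (e : R) n0 :
  u n @[n --> \oo] --> 0%E -> 0 < e -> exists m, (n0 <= m)%N /\ (u m <= e%:E)%E.
Proof.
move=> /fine_cvgP [[N1 _ uN1] cvu] e0.
have [N2 _ uN2] := (cvgrPdist_lt _ _).1 cvu e e0.
set m := maxn n0 (maxn N1 N2); exists m; split; first exact: leq_maxl.
have um := uN1 m (leq_trans (leq_maxl _ _) (leq_maxr _ _)).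
have := uN2 m (leq_trans (leq_maxr _ _) (leq_maxr _ _)).
rewrite /= sub0r normrN -(fineK um) lee_fin => /(le_lt_trans (ler_norm _)).
exact: ltW.
Qed.

Section Cabs.
Context {R : rcfType}.

Lemma cabs_ge0 (z : R[i]) : 0 <= cabs z.
Proof. exact: sqrtr_ge0. Qed.

Lemma cabs0 : cabs (0 : R[i]) = 0.
Proof. by rewrite /cabs /= expr0n /= addr0 sqrtr0. Qed.

Lemma cabs_real (x : R) : cabs (real_complex R x) = `|x|.
Proof. by rewrite /cabs /= expr0n /= addr0 sqrtr_sqr. Qed.

Lemma cabsM (x y : R[i]) : cabs (x * y) = cabs x * cabs y.
Proof.
have : cabs (x * y) = Normc.normc (x * y) /\ cabs x * cabs y = Normc.normc x * Normc.normc y.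
  by case: x; case: y.
move=> [-> ->]; have /(congr1 (@complex.Re R)) := normCM x y.
by rewrite /= mulr0 subr0.
Qed.

End Cabs.

Section QuasiNormedSymmetricSpace.
Context {d : measure_display} {T : measurableType d} {R : realType}.
Variables (mu : {measure set T -> \bar R}) (D : set T).
Hypothesis mD : measurable D.
Variables (E : set (T -> R[i])) (qn : (T -> R[i]) -> R).

Lemma measurable_cabs (f : T -> R[i]) : L0 D f -> measurable_fun D (fun x => cabs (f x)).
Proof.
case=> mre mim _.
have -> : (fun x => cabs (f x)) =
    Num.sqrt \o (fun x => complex.Re (f x) ^+ 2 + complex.Im (f x) ^+ 2) by [].
apply: measurableT_comp; first exact: continuous_measurable_fun (@sqrt_continuous R).
by apply: measurable_funD; exact: measurable_funX.
Qed.

Lemma measurable_cabs_gt (f : T -> R[i]) s : L0 D f ->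
  measurable [set x | D x /\ s < cabs (f x)].
Proof.
move=> /measurable_cabs /(_ mD _ (measurable_itv `]s, +oo[)).
by congr measurable; apply/seteqP; split => x /=; rewrite in_itv /= andbT.
Qed.

Lemma measurable_cabs_lt (f : T -> R[i]) s : L0 D f ->
  measurable [set x | D x /\ cabs (f x) < s].
Proof.
move=> /measurable_cabs /(_ mD _ (measurable_itv `]-oo, s[)).
by congr measurable; apply/seteqP; split => x /=; rewrite in_itv.
Qed.

Lemma rearr_le_cabs {f g : T -> R[i]} : L0 D f -> L0 D g ->
  (forall x, D x -> cabs (f x) <= cabs (g x)) -> rearr_le mu D f g.
Proof.
move=> Lf Lg fg t _; apply: ereal_inf_le_tmp => _ [s [s0 gs] <-]; exists s => //.
split => //; apply: le_trans gs; apply: le_measure; rewrite ?inE.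
- exact: measurable_cabs_gt.
- exact: measurable_cabs_gt.
- by move=> x [Dx fx]; split => //; exact: lt_le_trans fx (fg x Dx).
Qed.

Definition restrict0 (A : set T) (f : T -> R[i]) : T -> R[i] :=
  fun x => if x \in A then f x else 0.

Lemma L0_restrict0 {A f} : measurable A -> L0 D f -> L0 D (restrict0 A f).
Proof.
move=> mA [mre mim f0].
have eq_indic (p : R[i] -> R) : p 0 = 0 ->
    (fun x => p (restrict0 A f x)) = (\1_A : T -> R) \* (fun x => p (f x)).
  move=> p0; apply/funext => x; rewrite /restrict0 /= indicE.
  by case: (x \in A); rewrite ?mul1r ?mul0r.
split.
- rewrite eq_indic //; apply: measurable_funM => //; exact: measurable_indic.
- rewrite eq_indic //; apply: measurable_funM => //; exact: measurable_indic.
- by move=> x Dx; rewrite /restrict0 f0 //; case: (x \in A).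
Qed.

Lemma cabs_restrict0_le A f x : cabs (restrict0 A f x) <= cabs (f x).
Proof. by rewrite /restrict0; case: (x \in A); rewrite ?cabs0 ?cabs_ge0. Qed.

Lemma cabs_restrict0_subset A B f x : A `<=` B ->
  cabs (restrict0 A f x) <= cabs (restrict0 B f x).
Proof.
move=> AB; rewrite /restrict0; case: ifPn => [/set_mem/AB/mem_set -> //|_].
by rewrite cabs0 cabs_ge0.
Qed.

Definition env_decomp (f : T -> R[i]) (r : R) : Prop := exists n (fs : 'I_n -> T -> R[i]),
  [/\ forall i, E (fs i), f = (fun x => \sum_(i < n) fs i x) & \sum_(i < n) qn (fs i) <= r].

Lemma env_decomp_add {f g r s} : env_decomp f r -> env_decomp g s ->
  env_decomp (Defs.addf f g) (r + s).
Proof.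
move=> [n [fs [Efs -> fr]]] [m [gs [Egs -> gs_s]]].
pose hs i := match @fintype.split n m i with inl j => fs j | inr j => gs j end.
have hsl j : hs (lshift m j) = fs j by rewrite /hs (unsplitK (inl j)).
have hsr j : hs (rshift n j) = gs j by rewrite /hs (unsplitK (inr j)).
exists (n + m)%N, hs; split.
- by move=> i; rewrite /hs; case: (@fintype.split n m i).
- apply/funext => x; rewrite big_split_ord /Defs.addf /=.
  by congr (_ + _); apply: eq_bigr => i _; rewrite ?hsl ?hsr.
- rewrite big_split_ord; apply: lerD.
    by under eq_bigr do rewrite hsl.
  by under eq_bigr do rewrite hsr.
Qed.

Hypothesis HQ : is_qsym_space mu D E qn.

Lemma E_L0 {f} : E f -> L0 D f.
Proof. by case: HQ => [[HL0 _ _ _ _] _ _]; apply: HL0. Qed.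

Lemma E_add f g : E f -> E g -> E (Defs.addf f g).
Proof. by case: HQ => [[_ [_ [Hadd _]] _ _ _] _ _]; apply: Hadd. Qed.

Lemma E_scale c f : E f -> E (scalef c f).
Proof. by case: HQ => [[_ [_ [_ Hscale]] _ _ _] _ _]; apply: Hscale. Qed.

Lemma qn_scale c f : E f -> qn (scalef c f) = cabs c * qn f.
Proof. by case: HQ => [[_ _ _ Hscale _] _ _]; apply: Hscale. Qed.

Lemma E_sub {f g} : E f -> E g -> E (subf f g).
Proof.
move=> Ef Eg; have -> : subf f g = Defs.addf f (scalef (-1) g).
  by apply/funext => x; rewrite /subf /Defs.addf /scalef mulN1r.
by apply: E_add => //; exact: E_scale.
Qed.

Lemma qn_ge0 {f} : E f -> 0 <= qn f.
Proof. by case: HQ => [[_ _ Hqn _ _] _ _] /Hqn[]. Qed.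

Lemma E_cabs_le {f g} : L0 D f -> E g ->
  (forall x, D x -> cabs (f x) <= cabs (g x)) -> E f.
Proof.
case: HQ => [_ Hsym _] Lf Eg fg.
by case: (Hsym f g Lf Eg (rearr_le_cabs Lf (E_L0 Eg) fg)).
Qed.

Lemma qn_cabs_le {f g} : L0 D f -> E g ->
  (forall x, D x -> cabs (f x) <= cabs (g x)) -> qn f <= qn g.
Proof.
case: HQ => [_ Hsym _] Lf Eg fg.
by case: (Hsym f g Lf Eg (rearr_le_cabs Lf (E_L0 Eg) fg)).
Qed.

Lemma E_restrict0 {A f} : measurable A -> E f -> E (restrict0 A f).
Proof.
move=> mA Ef; apply: (E_cabs_le (L0_restrict0 mA (E_L0 Ef)) Ef) => x _.
exact: cabs_restrict0_le.
Qed.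

Lemma qn_restrict0_le A f : measurable A -> E f -> qn (restrict0 A f) <= qn f.
Proof.
move=> mA Ef; apply: (qn_cabs_le (L0_restrict0 mA (E_L0 Ef)) Ef) => x _.
exact: cabs_restrict0_le.
Qed.

Lemma qn_restrict0_subset A B h : measurable A -> measurable B -> A `<=` B -> E h ->
  qn (restrict0 A h) <= qn (restrict0 B h).
Proof.
move=> mA mB AB Eh; apply: qn_cabs_le; first exact: L0_restrict0 mA (E_L0 Eh).
  exact: E_restrict0.
by move=> x _; exact: cabs_restrict0_subset.
Qed.

Lemma qn_restrict0_le_scale (c : R) M g h : 0 <= c -> measurable M -> E g -> E h ->
  (forall x, D x -> M x -> cabs (g x) <= c * cabs (h x)) ->
  qn (restrict0 M g) <= c * qn h.
Proof.
move=> c0 mM Eg Eh gh; rewrite -[c](ger0_norm c0) -cabs_real -qn_scale //.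
apply: qn_cabs_le; [exact: L0_restrict0 mM (E_L0 Eg) | exact: E_scale |].
move=> x Dx; rewrite /restrict0 /scalef cabsM cabs_real ger0_norm //.
case: ifPn => [/set_mem|_]; first exact: gh.
by rewrite cabs0 mulr_ge0 ?cabs_ge0.
Qed.

Lemma env_decomp_E h : E h -> env_decomp h (qn h).
Proof.
move=> Eh; exists 1%N, (fun _ => h); split => //; last by rewrite big_ord1.
by apply/funext => x; rewrite big_ord1.
Qed.

Lemma env_decomp_restrict0 A f r : measurable A -> env_decomp f r ->
  env_decomp (restrict0 A f) r.
Proof.
move=> mA [n [fs [Efs -> fr]]]; exists n, (fun i => restrict0 A (fs i)); split.
- by move=> i; exact: E_restrict0.
- apply/funext => x; rewrite /restrict0; case: (x \in A) => //.
  by rewrite big1.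
- by apply: le_trans fr; apply: ler_sum => i _; exact: qn_restrict0_le.
Qed.

Definition env_sums (f : T -> R[i]) : set R :=
  [set r : R | exists n (fs : 'I_n -> T -> R[i]),
     [/\ forall i, E (fs i), f = (fun x => \sum_(i < n) fs i x) & r = \sum_(i < n) qn (fs i)]].

Lemma env_sums_qn f : E f -> env_sums f (qn f).
Proof.
move=> Ef; exists 1%N, (fun _ => f); split => //; last by rewrite big_ord1.
by apply/funext => x; rewrite big_ord1.
Qed.

Lemma env_sums_ge0 f : lbound (env_sums f) 0.
Proof. by move=> _ [n [fs [Efs _ ->]]]; apply: sumr_ge0 => i _; exact: qn_ge0. Qed.

Lemma env_norm_ge0 f : E f -> 0 <= env_norm E qn f.
Proof. by move=> Ef; apply: lb_le_inf; [exists (qn f); exact: env_sums_qn | exact: env_sums_ge0]. Qed.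

Lemma env_norm_le_decomp {f r} : env_decomp f r -> env_norm E qn f <= r.
Proof.
move=> [n [fs [Efs ef fr]]]; apply: le_trans fr; apply: ge_inf.
  by exists 0; exact: env_sums_ge0.
by exists n, fs.
Qed.

Lemma env_norm_lt_decomp {f e} : E f -> env_norm E qn f < e -> exists2 r, r < e & env_decomp f r.
Proof.
move=> Ef /inf_lt [|_ [n [fs [Efs ef ->]]] fe]; first by exists (qn f); exact: env_sums_qn.
by exists (\sum_(i < n) qn (fs i)) => //; exists n, fs.
Qed.

Lemma env_decomp_split {h g S A r} : E h -> E g -> measurable S -> measurable A ->
  env_decomp (subf h g) r ->
  env_decomp h (qn (restrict0 S h) + qn (restrict0 (~` S `&` A) h)
                + qn (restrict0 (~` S `&` ~` A) g) + r).
Proof.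
move=> Eh Eg mS mA dhg; set M := ~` S `&` ~` A.
have mM : measurable M by apply: measurableI; apply: measurableC.
have mSA : measurable (~` S `&` A) by apply: measurableI => //; apply: measurableC.
have {1}-> : h = Defs.addf (Defs.addf (Defs.addf (restrict0 S h) (restrict0 (~` S `&` A) h))
                  (restrict0 M g)) (restrict0 M (subf h g)).
  apply/funext => x; rewrite /Defs.addf /restrict0 /subf /M !in_setI !in_setC.
  by case: (x \in S); case: (x \in A); rewrite /= ?addr0 ?add0r // addrC subrK.
apply: env_decomp_add; last exact: env_decomp_restrict0.
apply: env_decomp_add; first apply: env_decomp_add.
all: by apply: env_decomp_E; exact: E_restrict0.
Qed.

Hypothesis HO : order_continuous mu D E qn.

Lemma qn_restrict0_decreasing_small {h} {B : nat -> set T} {N : set T} {eps : R} :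
  E h -> (forall k, measurable (B k)) -> (forall k, B k.+1 `<=` B k) ->
  measurable N -> mu N = 0%E ->
  (forall x, D x -> ~ N x -> exists k, ~ B k x \/ cabs (h x) = 0) ->
  0 < eps -> exists k, qn (restrict0 (B k) h) < eps.
Proof.
move=> Eh mB decB mN N0 vanish eps0.
have Bmono : {homo B : k n / (k <= n)%N >-> n `<=` k}.
  apply: (@homo_leq _ B (fun X Y => Y `<=` X)); [exact: subset_refl | | exact: decB].
  by move=> Y X Z YX ZY; exact: subset_trans ZY YX.
pose F k x := real_complex R (cabs (restrict0 (B k) h x)).
have cabsF k x : cabs (F k x) = cabs (restrict0 (B k) h x).
  by rewrite cabs_real ger0_norm ?cabs_ge0.
have LF k : L0 D (F k).
  have Lk := L0_restrict0 (mB k) (E_L0 Eh).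
  split; [exact: measurable_cabs Lk | exact: measurable_cst |].
  by case: Lk => _ _ vanishD x Dx; rewrite /F vanishD ?cabs0.
have cvF0 : (fun k => qn (F k)) @ \oo --> 0.
  apply: (proj2 (HO h Eh F LF _ _)).
  - move=> k; exists set0; split => // x _ _ /=.
    by rewrite cabs_ge0 cabs_restrict0_le.
  - exists N; split => // x Dx Nx; split => /= [k|].
      exact/cabs_restrict0_subset/decB.
    apply/cvgrPdist_le => e e0; have [k vk] := vanish x Dx Nx.
    exists k => // n /= kn.
    suff -> : cabs (restrict0 (B n) h x) = 0 by rewrite subr0 normr0 ltW.
    rewrite /restrict0; case: ifPn => [/set_mem Bn|_]; last exact: cabs0.
    case: vk => [nBk|//].
    by have /nBk : B k x := Bmono k n kn x Bn.
have [k _ small] := (cvgrPdist_lt _ _).1 cvF0 eps eps0.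
exists k; have := small k (leqnn k); rewrite /= sub0r normrN.
apply: le_lt_trans; apply: le_trans (ler_norm _).
apply: qn_cabs_le; [exact: L0_restrict0 (mB k) (E_L0 Eh) | | by move=> x _; rewrite cabsF].
apply: (E_cabs_le (LF k) (E_restrict0 (mB k) Eh)) => x _; by rewrite cabsF.
Qed.

Lemma qn_restrict0_small_values {h} {eps : R} : E h -> 0 < eps ->
  exists2 eta, 0 < eta & qn (restrict0 [set x | D x /\ cabs (h x) < eta] h) < eps.
Proof.
move=> Eh eps0; pose S k := [set x | D x /\ cabs (h x) < k.+1%:R^-1].
have mS k : measurable (S k) by apply: measurable_cabs_lt (E_L0 Eh).
have decS k : S k.+1 `<=` S k.
  move=> x [Dx hx]; split => //; apply: lt_le_trans hx _.
  by rewrite lef_pV2 ?posrE ?ltr0n // ler_nat.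
have vanish x : D x -> ~ set0 x -> exists k, ~ S k x \/ cabs (h x) = 0.
  move=> _ _; have := cabs_ge0 (h x); rewrite le_eqVlt => /orP [/eqP <-|cabs_gt0].
    by exists 0%N; right.
  exists (Num.truncn (cabs (h x))^-1); left => -[_].
  apply/negP; rewrite -leNgt -[leRHS](invrK (cabs (h x))) lef_pV2 ?posrE ?invr_gt0 ?ltr0n //.
  exact/ltW/truncnS_gt.
have [k hk] := qn_restrict0_decreasing_small Eh mS decS measurable0 (measure0 _) vanish eps0.
by exists k.+1%:R^-1; rewrite ?invr_gt0 ?ltr0n.
Qed.

Lemma qn_restrict0_measure_vanishing {h} {A : nat -> set T} n0 {eps : R} : E h ->
  (forall m, measurable (A m)) -> mu (A m) @[m --> \oo] --> 0%E -> 0 < eps ->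
  exists2 m, (n0 <= m)%N & qn (restrict0 (A m) h) < eps.
Proof.
move=> Eh mA cvA eps0.
have /choice [m hm] : forall k, exists m, (n0 <= m)%N /\ (mu (A m) <= (1 / (2 ^ k.+1)%:R)%:E)%E.
  by move=> k; apply: cvg0_eventually_le; rewrite // divr_gt0 // ltr0n expn_gt0.
pose G k := A (m k); pose B k := \bigcup_(j >= k) G j.
have mB k : measurable (B k) by apply: bigcup_measurable => j _; exact: mA.
have decB k : B k.+1 `<=` B k by move=> x [j /= kj Gj]; exists j => //=; exact: ltnW.
have mN : measurable (lim_sup_set G).
  by apply: bigcap_measurable => [|k _]; [exists 0%N | exact: mB].
have N0 : mu (lim_sup_set G) = 0%E.
  apply: lim_sup_set_cvg0; first by move=> k; exact: mA.
  apply: (@le_lt_trans _ _ 1%:E); last exact: ltey.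
  apply: le_trans (epsilon_trick0 xpredT ler01).
  by apply: lee_nneseries => k; [move=> _ _; exact: measure_ge0 | move=> _; exact: (hm k).2].
have outside x : D x -> ~ lim_sup_set G x -> exists k, ~ B k x \/ cabs (h x) = 0.
  move=> _ Nx; have [k nBk] : exists k, ~ B k x.
    by apply/existsNP => allB; apply: Nx => k _; exact: allB.
  by exists k; left.
have [k hk] := qn_restrict0_decreasing_small Eh mB decB mN N0 outside eps0.
exists (m k); first exact: (hm k).1.
apply: le_lt_trans hk; apply: qn_restrict0_subset => //.
by move=> x Gx; exists k => /=.
Qed.

Theorem HC_of_order_continuous : HC mu D E qn.
Proof.
move=> F EF cauchy cvgF0; apply/cvgrPdist_le => e e0.
pose eps := e / 5%:R; have eps0 : 0 < eps by rewrite divr_gt0.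
have [n0 close] := cauchy eps eps0.
pose h := F n0; have Eh : E h := EF n0.
have [eta eta0] := qn_restrict0_small_values Eh eps0.
set S := [set x | D x /\ cabs (h x) < eta] => small_S.
have mS : measurable S by exact: measurable_cabs_lt (E_L0 Eh).
have qnh1 : 0 < qn h + 1 by rewrite ltr_wpDl ?qn_ge0.
pose c := eps / (qn h + 1); have c0 : 0 < c by rewrite divr_gt0.
have cqh : c * qn h <= eps.
  by rewrite mulrAC ler_pdivrMr // ler_pM2l // lerDl.
pose A m := [set x | D x /\ c * eta < cabs (F m x)].
have mA m : measurable (A m) by exact: measurable_cabs_gt (E_L0 (EF m)).
have cvA : mu (A m) @[m --> \oo] --> 0%E.
  have -> : (fun m => mu (A m)) =
      (fun n => mu [set x | D x /\ c * eta < cabs (F n x - (fun=> 0) x)]).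
    by apply/funext => n; congr (mu _); apply/funext => x /=; rewrite subr0.
  exact: cvgF0 _ (mulr_gt0 c0 eta0).
have [m n0m small_A] := qn_restrict0_measure_vanishing n0 Eh mA cvA eps0.
have [r r_lt dr] := env_norm_lt_decomp (E_sub Eh (EF m)) (close n0 m (leqnn _) n0m).
have mSA : measurable (~` S `&` A m) by apply: measurableI => //; exact: measurableC.
have small_SA : qn (restrict0 (~` S `&` A m) h) <= eps.
  by apply/ltW/(le_lt_trans _ small_A)/qn_restrict0_subset => // x [].
have small_M : qn (restrict0 (~` S `&` ~` A m) (F m)) <= eps.
  apply: le_trans cqh; apply: qn_restrict0_le_scale; rewrite ?ltW //.
    by apply: measurableI; apply: measurableC.
  move=> x Dx [nS nA].
  have Fm_le : cabs (F m x) <= c * eta by rewrite leNgt; apply/negP => lt; apply: nA.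
  have eta_le : eta <= cabs (h x) by rewrite leNgt; apply/negP => lt; apply: nS.
  by apply: le_trans Fm_le _; rewrite ler_wpM2l // ltW.
exists n0 => // N /= n0N.
have [r' r'_lt dr'] := env_norm_lt_decomp (E_sub (EF N) Eh) (close N n0 n0N (leqnn _)).
have := env_norm_le_decomp (env_decomp_add dr' (env_decomp_split Eh (EF m) mS (mA m) dr)).
have -> : Defs.addf (subf (F N) h) h = F N.
  by apply/funext => x; rewrite /Defs.addf /subf subrK.
rewrite sub0r normrN ger0_norm ?env_norm_ge0 //.
have e5 : e = 5%:R * eps by rewrite /eps mulrC divfK ?pnatr_eq0.
move/le_trans; apply; lra.
Qed.

End QuasiNormedSymmetricSpace.

Lemma Ico0_measurable (R : realType) (alpha : \bar R) : measurable (Ico0 alpha).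
Proof.
case: alpha => [r| |].
- rewrite (_ : Ico0 r%:E = [set` `[0, r[]); first exact: measurable_itv.
  apply/seteqP; split => x /=; rewrite in_itv /= /Ico0 /=.
    by case=> -> /=; rewrite lte_fin.
  by case/andP => -> /=; rewrite lte_fin.
- rewrite (_ : Ico0 +oo%E = [set` `[0, +oo[]); first exact: measurable_itv.
  apply/seteqP; split => x /=; rewrite in_itv /= andbT /Ico0 /=; first by case.
  by move=> ->; split => //; exact: ltey.
- rewrite (_ : Ico0 -oo%E = set0) //.
  by apply/seteqP; split => x //; rewrite /Ico0 /= => -[_]; rewrite ltNge leNye.
Qed.

Theorem mainTheorem4 (R : realType) :
  (forall alpha : \bar R, (0 < alpha)%E ->
     forall (E : set (R -> R[i])) (qn : (R -> R[i]) -> R),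
       is_qsym_space (@lebesgue_measure R) (Ico0 alpha) E qn ->
       order_continuous (@lebesgue_measure R) (Ico0 alpha) E qn ->
       HC (@lebesgue_measure R) (Ico0 alpha) E qn) /\
  (forall (E : set (nat -> R[i])) (qn : (nat -> R[i]) -> R),
       is_qsym_space (@counting nat R) setT E qn ->
       (forall f, E f -> (fun n => cabs (f n)) @ \oo --> 0%R) ->
       order_continuous (@counting nat R) setT E qn ->
       HC (@counting nat R) setT E qn).
Proof.
split.
- move=> alpha _ E qn HQ HO; apply: HC_of_order_continuous => //; exact: Ico0_measurable.
- (* the argument works for any measure *)
  by move=> E qn HQ _ HO; apply: HC_of_order_continuous.
Qed.
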